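(* Let $A$ be a Noetherian ring, $I$ an ideal of $A$ with system of generators $(y_1,\ldots,y_m)$, and $\hat A$ the $I$-adic completion of $A$. Let $B$ be a subring of $A$ such that $y_1,\ldots,y_m\in B$ and $y_1,\ldots,y_m$ generate the ideal $B\cap I$ of $B$. Then, in $\hat A$, every element $f\in B$ can be written as $$f=\sum_{\beta\in\mathbb{Z}^m_{\geqslant0}}c_\beta\,y^\beta$$ with all coefficients $c_\beta\in((A\setminus I)\cap B)\cup\{0\}$.
   Context: $y^\beta=y_1^{\beta_1}\cdots y_m^{\beta_m}$; the series converges $I$-adically in $\hat A$. *)

From HB Require Import structures.
From mathcomp Require Import all_boot all_order all_algebra.
Set Implicit Arguments. Unset Strict Implicit. Unset Printing Implicit Defensive.
Import Order.TTheory GRing.Theory Num.Theory.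
Local Open Scope ring_scope.

Definition lincomb_in (A : comNzRingType) (R G : A -> Prop) (x : A) : Prop :=
  exists s : seq (A * A),
    (forall p, p \in s -> R p.1 /\ G p.2) /\ x = \sum_(p <- s) p.1 * p.2.

Definition idealgen (A : comNzRingType) (G : A -> Prop) : A -> Prop :=
  lincomb_in (fun _ => True) G.

Definition is_ideal (A : comNzRingType) (J : A -> Prop) : Prop :=
  J 0 /\ (forall x y, J x -> J y -> J (x + y)) /\ (forall a x, J x -> J (a * x)).

Definition noetherian (A : comNzRingType) : Prop :=
  forall J : A -> Prop, is_ideal J ->
    exists s : seq A, forall x, J x <-> idealgen (fun g => g \in s) x.

Definition is_subring (A : comNzRingType) (B : A -> Prop) : Prop :=
  B 1 /\ (forall x y, B x -> B y -> B (x - y)) /\ (forall x y, B x -> B y -> B (x * y)).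

Definition idealmul (A : comNzRingType) (I J : A -> Prop) : A -> Prop :=
  idealgen (fun z => exists a b, I a /\ J b /\ z = a * b).

Definition idealpow (A : comNzRingType) (I : A -> Prop) (n : nat) : A -> Prop :=
  iter n (idealmul I) (fun _ => True).

Definition multiindex (m : nat) := {ffun 'I_m -> nat}.

Definition mdeg (m : nat) (b : multiindex m) : nat := (\sum_(i < m) b i)%N.

Definition mono (A : comNzRingType) (m : nat) (y : 'I_m -> A) (b : multiindex m) : A :=
  \prod_(i < m) y i ^+ b i.

(* The family (u_beta) is summable with sum f in the I-adic topology, i.e.
   sum_beta u_beta = f holds in the I-adic completion of A: for every n there is
   N such that every finite partial sum containing all beta with |beta| < N
   differs from f by an element of I^n. *)
Definition Iadic_sum (A : comNzRingType) (I : A -> Prop) (m : nat)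
    (u : multiindex m -> A) (f : A) : Prop :=
  forall n : nat, exists N : nat, forall S : seq (multiindex m),
    uniq S -> (forall b, (mdeg b < N)%N -> b \in S) ->
    idealpow I n (f - \sum_(b <- S) u b).

From Stdlib Require Import ClassicalEpsilon.
From HB Require Import structures.
From mathcomp Require Import all_boot all_order all_algebra.
Import GRing.Theory.
Set Implicit Arguments. Unset Strict Implicit.
Local Open Scope ring_scope.

(* Expand f degree by degree.  At stage d,
     f = sum_{|b| < d} c_b y^b + sum_{|b| = d} r_b y^b   with every r_b in B.
   A remainder r_b outside I becomes the coefficient c_b; a remainder in
   B /\ I is written sum_i a_i y_i with a_i in B, and a_i is pushed to the
   index b + e_i of degree d + 1.  The degree-d tail lies in I^d, which gives
   I-adic convergence. *)

Section Ideals.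
Variable A : comNzRingType.
Implicit Types (G J : A -> Prop) (x : A).

Lemma idealgen_is_ideal G : is_ideal (idealgen G).
Proof.
split; first by exists [::]; rewrite big_nil.
split.
- move=> _ _ [s [Hs ->]] [t [Ht ->]]; exists (s ++ t); split; last by rewrite big_cat.
  by move=> p; rewrite mem_cat => /orP [] ?; [apply: Hs | apply: Ht].
- move=> a _ [s [Hs ->]]; exists [seq (a * p.1, p.2) | p <- s]; split.
  + by move=> _ /mapP [q qs ->]; split => //; exact: (Hs q qs).2.
  + by rewrite big_map big_distrr; apply: eq_bigr => p _ /=; rewrite mulrA.
Qed.

Lemma idealgen_mem G x : G x -> idealgen G x.
Proof.
by move=> Gx; exists [:: (1, x)]; rewrite big_seq1 mul1r; split => // p /[1!inE] /eqP ->.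
Qed.

Lemma idealgen_sub G G' : (forall x, G x -> G' x) -> forall x, idealgen G x -> idealgen G' x.
Proof. by move=> GG' _ [s [Hs ->]]; exists s; split => // p /Hs [? /GG']. Qed.

Lemma ideal_sub J x x' : is_ideal J -> J x -> J x' -> J (x - x').
Proof. by move=> [_ [JD JM]] Jx Jx'; apply: JD => //; rewrite -mulN1r; apply: JM. Qed.

Lemma ideal_sum J (T : eqType) (r : seq T) (P : pred T) (F : T -> A) :
  is_ideal J -> (forall i, i \in r -> P i -> J (F i)) -> J (\sum_(i <- r | P i) F i).
Proof.
move=> [J0 [JD _]] JF; rewrite big_seq_cond.
by apply: big_ind => // i /andP [ir Pi]; apply: JF.
Qed.

End Ideals.

Section IdealPowers.
Variables (A : comNzRingType) (I : A -> Prop).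

Lemma idealpow_is_ideal n : is_ideal (idealpow I n).
Proof. by case: n => [|n]; [do !split | exact: idealgen_is_ideal]. Qed.

Lemma idealpowS n x : idealpow I n.+1 x -> idealpow I n x.
Proof.
elim: n x => [|n IH] x //=; apply: idealgen_sub => _ [a [b [Ia [Jb ->]]]].
by exists a, b; do !split => //; apply: IH.
Qed.

Lemma idealpow_le n k x : (n <= k)%N -> idealpow I k x -> idealpow I n x.
Proof. by move=> /subnK <-; elim: (k - n)%N => // d IH /idealpowS /IH. Qed.

Lemma idealpow_mull n a x : idealpow I n x -> idealpow I n (a * x).
Proof. by have [_ [_ JM]] := idealpow_is_ideal n; apply: JM. Qed.

Lemma idealpow_exp_mul n k a x : I a -> idealpow I n x -> idealpow I (k + n) (a ^+ k * x).
Proof.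
move=> Ia Jx; elim: k => [|k IH]; first by rewrite mul1r.
by rewrite exprS -mulrA; apply: idealgen_mem; exists a, (a ^+ k * x).
Qed.

Lemma idealpow_monomial m (y : 'I_m -> A) (b : multiindex m) :
  (forall i, I (y i)) -> idealpow I (mdeg b) (mono y b).
Proof.
rewrite /mdeg /mono => Iy; elim: (index_enum _) => [|j r IH]; first by rewrite !big_nil.
by rewrite !big_cons; apply: idealpow_exp_mul.
Qed.

End IdealPowers.

Section Subrings.
Variables (A : comNzRingType) (B : A -> Prop).
Hypothesis subB : is_subring B.

Lemma subring0 : B 0.
Proof. by case: subB => B1 [BB _]; rewrite -(subrr 1); apply: BB. Qed.

Lemma subringD x x' : B x -> B x' -> B (x + x').
Proof.
case: subB => _ [BB _] Bx Bx'.
by rewrite -[x']opprK -[- x']sub0r; apply: (BB) => //; apply: (BB) => //; apply: subring0.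
Qed.

Lemma subring_sum (T : Type) (r : seq T) (P : pred T) (F : T -> A) :
  (forall i, P i -> B (F i)) -> B (\sum_(i <- r | P i) F i).
Proof. by apply: big_ind; [apply: subring0 | apply: subringD]. Qed.

Lemma lincomb_gens_coef m (y : 'I_m -> A) x :
  lincomb_in B (fun g => exists i, g = y i) x ->
  exists a : 'I_m -> A, (forall i, B (a i)) /\ x = \sum_i a i * y i.
Proof.
move=> [s [Hs ->]]; elim: s Hs => [|p s IH] Hs.
  exists (fun=> 0); split=> [_|]; first exact: subring0.
  by rewrite big_nil big1 // => i _; rewrite mul0r.
have [Bp [j yj]] := Hs p (mem_head _ _); rewrite big_cons.
have [a [Ba ->]] := IH (fun q qs => Hs q (predU1r _ _ qs)).
exists (fun i => a i + (if i == j then p.1 else 0)); split.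
  by move=> i; apply: subringD => //; case: eqP => _ //; apply: subring0.
under [RHS]eq_bigr do rewrite mulrDl; rewrite big_split /= addrC.
congr (_ + _); rewrite (bigD1 j) //= eqxx big1 ?addr0 ?yj //.
by move=> i /negPf ->; rewrite mul0r.
Qed.

Definition residue m (y : 'I_m -> A) (lift : A -> 'I_m -> A) (x : A) : A :=
  x - \sum_i lift x i * y i.

Lemma exists_division m (y : 'I_m -> A) (I : A -> Prop) :
  (forall x, B x -> I x -> lincomb_in B (fun g => exists i, g = y i) x) ->
  exists lift : A -> 'I_m -> A, (forall x i, B (lift x i)) /\
    forall x, B x -> let r := residue y lift x in r = 0 \/ (~ I r /\ B r).
Proof.
move=> BI_lincomb.
suff /choice [lift lift_spec] : forall x, exists a : 'I_m -> A, (forall i, B (a i)) /\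
    (B x -> let r := x - \sum_i a i * y i in r = 0 \/ (~ I r /\ B r)).
  by exists lift; split => [x i | x]; [apply: (lift_spec x).1 | apply: (lift_spec x).2].
move=> x; have [[Bx Ix]|notBI] := classic (B x /\ I x).
  have [a [Ba ->]] := lincomb_gens_coef (BI_lincomb x Bx Ix).
  by exists a; split => // _; left; rewrite subrr.
exists (fun=> 0); split=> [_|Bx]; first exact: subring0.
rewrite big1 ?subr0 => [|i _]; last by rewrite mul0r.
by right; split => // Ix; apply: notBI.
Qed.

End Subrings.

Section MultiIndices.
Variable m : nat.
Implicit Types (b : multiindex m) (i : 'I_m).

Definition mi_zero : multiindex m := [ffun=> 0%N].

Definition mi_incr b i : multiindex m := [ffun j => (b j + (j == i))%N].

Lemma mdeg_zero : mdeg mi_zero = 0%N.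
Proof. by rewrite /mdeg big1 // => i _; rewrite ffunE. Qed.

Lemma mdeg_incr b i : mdeg (mi_incr b i) = (mdeg b).+1.
Proof.
rewrite /mdeg; under eq_bigr do rewrite ffunE; rewrite big_split /= -addn1.
by congr (_ + _)%N; rewrite (bigD1 i) //= eqxx big1 // => j /negPf ->.
Qed.

Lemma leq_mdeg b i : (b i <= mdeg b)%N.
Proof. by rewrite /mdeg (bigD1 i) //= leq_addr. Qed.

Lemma mono_zero (A : comNzRingType) (y : 'I_m -> A) : mono y mi_zero = 1.
Proof. by rewrite /mono big1 // => i _; rewrite ffunE. Qed.

Lemma mono_incr (A : comNzRingType) (y : 'I_m -> A) b i :
  mono y (mi_incr b i) = mono y b * y i.
Proof.
rewrite /mono; under eq_bigr do rewrite ffunE exprD; rewrite big_split /=.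
by congr (_ * _); rewrite (bigD1 i) //= eqxx big1 ?mulr1 // => j /negPf ->.
Qed.

Definition mi_box k : seq (multiindex m) :=
  [seq [ffun i => nat_of_ord (g i)] | g : {ffun 'I_m -> 'I_k.+1}].

Lemma mi_box_uniq k : uniq (mi_box k).
Proof.
rewrite map_inj_uniq ?enum_uniq // => g g' /ffunP eq_gg'.
by apply/ffunP => i; apply/val_inj; move: (eq_gg' i); rewrite !ffunE.
Qed.

Lemma mem_mi_box k b : (forall i, b i <= k)%N -> b \in mi_box k.
Proof.
move=> bk; apply/mapP; exists [ffun i => inord (b i)]; first by rewrite mem_enum.
by apply/ffunP => i; rewrite !ffunE inordK // ltnS.
Qed.

Definition mi_deg_eq d := [seq b <- mi_box d | mdeg b == d].
Definition mi_deg_lt d := [seq b <- mi_box d | (mdeg b < d)%N].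

Lemma mi_deg_eq_uniq d : uniq (mi_deg_eq d).
Proof. exact/filter_uniq/mi_box_uniq. Qed.

Lemma mi_deg_lt_uniq d : uniq (mi_deg_lt d).
Proof. exact/filter_uniq/mi_box_uniq. Qed.

Lemma mem_mi_deg_eq d b : (b \in mi_deg_eq d) = (mdeg b == d).
Proof.
rewrite mem_filter; case: eqP => //= <-.
by apply: mem_mi_box => i; apply: leq_mdeg.
Qed.

Lemma mem_mi_deg_lt d b : (b \in mi_deg_lt d) = (mdeg b < d)%N.
Proof.
rewrite mem_filter; case: ltnP => //= lt_bd.
by apply: mem_mi_box => i; apply: leq_trans (leq_mdeg b i) (ltnW lt_bd).
Qed.

Lemma big_mi_deg_ltS (R : nmodType) d (F : multiindex m -> R) :
  \sum_(b <- mi_deg_lt d.+1) F b = \sum_(b <- mi_deg_lt d) F b + \sum_(b <- mi_deg_eq d) F b.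
Proof.
rewrite -big_cat; apply/perm_big/uniq_perm => [||b].
- exact: mi_deg_lt_uniq.
- rewrite cat_uniq mi_deg_lt_uniq mi_deg_eq_uniq andbT /=; apply/hasPn => b.
  by rewrite mem_mi_deg_eq mem_mi_deg_lt => /eqP ->; rewrite ltnn.
- by rewrite mem_cat mem_mi_deg_eq !mem_mi_deg_lt ltnS leq_eqVlt orbC.
Qed.

End MultiIndices.

Lemma big_if_eq_mull (R : pzSemiRingType) (T : eqType) (s : seq T) (x : T) (a : R)
    (F : T -> R) :
  uniq s -> x \in s -> \sum_(t <- s) (if t == x then a else 0) * F t = a * F x.
Proof.
move=> uniq_s xs; rewrite (big_rem x) //= eqxx big1_seq ?addr0 //.
by move=> t /andP [_]; case: eqP => [->|_ _]; rewrite ?mem_rem_uniqF ?mul0r.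
Qed.

Lemma big_pushforward (R : pzSemiRingType) (T U : eqType) (K : finType)
    (s : seq T) (s' : seq U) (h : T -> K -> U) (a : T -> K -> R) (F : U -> R) :
  uniq s' -> (forall t k, t \in s -> h t k \in s') ->
  \sum_(u <- s') (\sum_(t <- s) \sum_k (if u == h t k then a t k else 0)) * F u
  = \sum_(t <- s) \sum_k a t k * F (h t k).
Proof.
move=> uniq_s' hs'.
under eq_bigr do rewrite big_distrl; rewrite exchange_big.
apply: eq_big_seq => t ts; under eq_bigr do rewrite big_distrl; rewrite exchange_big.
by apply: eq_bigr => k _; rewrite big_if_eq_mull ?hs'.
Qed.

Section Expansion.
Variables (A : comNzRingType) (m : nat) (y : 'I_m -> A) (B : A -> Prop).
Variables (lift : A -> 'I_m -> A) (f : A).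
Hypotheses (subB : is_subring B) (lift_B : forall x i, B (lift x i)) (Bf : B f).

(* remainder d b is the coefficient of y^b, |b| = d, in the degree-d tail. *)
Fixpoint remainder (d : nat) : multiindex m -> A :=
  if d is d'.+1 then fun g =>
    \sum_(b <- mi_deg_eq m d') \sum_i (if g == mi_incr b i then lift (remainder d' b) i else 0)
  else fun b => if b == mi_zero m then f else 0.

Definition expansion_coef (b : multiindex m) : A := residue y lift (remainder (mdeg b) b).

Lemma remainder_B d b : B (remainder d b).
Proof.
elim: d b => [|d IH] b /=; first by case: eqP => _ //; apply: subring0.
apply: subring_sum => // c _; apply: subring_sum => // i _.
by case: eqP => _ //; apply: subring0.
Qed.

Lemma remainder_step d :
  \sum_(b <- mi_deg_eq m d) remainder d b * mono y b =
  \sum_(b <- mi_deg_eq m d) expansion_coef b * mono y b +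
  \sum_(b <- mi_deg_eq m d.+1) remainder d.+1 b * mono y b.
Proof.
have incr_deg b i : b \in mi_deg_eq m d -> mi_incr b i \in mi_deg_eq m d.+1.
  by rewrite !mem_mi_deg_eq mdeg_incr => /eqP ->.
rewrite /= big_pushforward ?mi_deg_eq_uniq // -big_split.
apply: eq_big_seq => b; rewrite mem_mi_deg_eq => /eqP deg_b /=.
rewrite /expansion_coef deg_b -{1}(subrK (\sum_i lift (remainder d b) i * y i) (remainder d b)).
rewrite mulrDl big_distrl; congr (_ + _); apply: eq_bigr => i _.
by rewrite mono_incr /= mulrA mulrAC.
Qed.

Lemma expansion_remainder d :
  f - \sum_(b <- mi_deg_lt m d) expansion_coef b * mono y b =
  \sum_(b <- mi_deg_eq m d) remainder d b * mono y b.
Proof.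
elim: d => [|d IH].
  rewrite big1_seq ?subr0 => [|b /andP [_]]; last by rewrite mem_mi_deg_lt.
  by rewrite big_if_eq_mull ?mi_deg_eq_uniq ?mem_mi_deg_eq ?mdeg_zero ?mono_zero ?mulr1.
by rewrite big_mi_deg_ltS opprD addrA IH remainder_step addrAC subrr add0r.
Qed.

End Expansion.

Lemma Iadic_sum_of_truncations (A : comNzRingType) (I : A -> Prop) m
    (u : multiindex m -> A) (f : A) :
  (forall b, idealpow I (mdeg b) (u b)) ->
  (forall n, idealpow I n (f - \sum_(b <- mi_deg_lt m n) u b)) ->
  Iadic_sum I u f.
Proof.
move=> u_deg trunc n; exists n => S uniq_S S_lt.
have -> : \sum_(b <- S) u b =
    \sum_(b <- mi_deg_lt m n) u b + \sum_(b <- S | ~~ (mdeg b < n)%N) u b.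
  rewrite (bigID (fun b => (mdeg b < n)%N)) /= -big_filter; congr (_ + _).
  apply/perm_big/uniq_perm => [||b]; rewrite ?mi_deg_lt_uniq ?filter_uniq //.
  by rewrite mem_filter mem_mi_deg_lt; case: ltnP => //= /S_lt.
rewrite opprD addrA; apply: ideal_sub; [exact: idealpow_is_ideal | exact: trunc |].
apply: ideal_sum => [|b _]; first exact: idealpow_is_ideal.
by rewrite -leqNgt => /idealpow_le; apply.
Qed.

Theorem mainTheorem18 (A : comNzRingType) (m : nat) (y : 'I_m -> A)
    (I B : A -> Prop) :
  noetherian A ->
  (forall x, I x <-> idealgen (fun g => exists i, g = y i) x) ->
  is_subring B ->
  (forall i, B (y i)) ->
  (forall x, (B x /\ I x) <-> lincomb_in B (fun g => exists i, g = y i) x) ->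
  forall f : A, B f ->
    exists c : multiindex m -> A,
      (forall b, c b = 0 \/ (~ I (c b) /\ B (c b))) /\
      Iadic_sum I (fun b => c b * mono y b) f.
Proof.
move=> _ I_gen subB _ BI_lincomb f Bf.
have Iy i : I (y i) by apply/I_gen/idealgen_mem; exists i.
have [lift [lift_B lift_res]] :=
  exists_division subB (fun x Bx Ix => (BI_lincomb x).1 (conj Bx Ix)).
exists (expansion_coef y lift f); split=> [b|].
  by apply: lift_res; apply: remainder_B.
apply: Iadic_sum_of_truncations => [b|n]; first exact/idealpow_mull/idealpow_monomial.
rewrite expansion_remainder; apply: ideal_sum => [|b]; first exact: idealpow_is_ideal.
by rewrite mem_mi_deg_eq => /eqP <- _; apply/idealpow_mull/idealpow_monomial.
Qed.
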